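(* Let $m\ge2$, $n$ be integers and $k$ an integer with $1\le k\le n^2-3n+2$, written $k=(n-1)q+r$ with $q\ge0$, $1\le r\le n-1$. Let $M_1=(\mu_{ij})$ be the $n\times n$ $0/1$ matrix with $\mu_{1,n-1}=\mu_{1,n}=1$, $\mu_{i,i-1}=1$ for $2\le i\le n$, all other entries $0$. Let $\mathbb{A}_0$ be the order $m$, dimension $n$ tensor with $(\mathbb{A}_0)_{ij\ldots j}=\mu_{ij}$ and all entries with $i_2,\ldots,i_m$ not all equal equal to $0$. Let $\mathbb{A}_k=(a^{(k)}_{i_1\ldots i_m})$ be the order $m$, dimension $n$ tensor with $a^{(k)}_{ij\ldots j}=\mu_{ij}$; $a^{(k)}_{ii_2\ldots i_m}=1$ whenever $i\in[n]\setminus\{r-q,\ldots,r,r+1\}\pmod n$ and the set of distinct values among $i_2,\ldots,i_m$ equals $\{r-q-1,r\}\pmod n$; and all other entries $0$. Then $S_t(\mathbb{A}_k,n-1)=S_t(\mathbb{A}_0,n-1)$ for every integer $t$ with $1\le t\le k$.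
   Context: For an integer $a$, $|a|_n$ is the least positive integer congruent to $a$ modulo $n$, and $\{a_1,\ldots,a_s\}\pmod n$ means $\{|a_1|_n,\ldots,|a_s|_n\}$. General product of dimension-$n$ tensors: for $\mathbb{A}$ of order $m\ge2$ and $\mathbb{B}$ of order $k\ge1$, $(\mathbb{A}\mathbb{B})_{i\alpha_1\ldots\alpha_{m-1}}=\sum_{i_2,\ldots,i_m=1}^n a_{ii_2\ldots i_m}b_{i_2\alpha_1}\cdots b_{i_m\alpha_{m-1}}$ ($\alpha_l\in[n]^{k-1}$); it is associative and $\mathbb{A}^k$ is the $k$-fold power. $(M(\mathbb{C}))_{ij}=c_{ij\ldots j}$ is the majorization matrix. For $j\in[n]$, $k\ge1$: $S_k(\mathbb{A},j)=\{u\in[n]\mid (M(\mathbb{A}^k))_{uj}>0\}$. *)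

(* Tensors with nonnegative integer (0/1) entries; all
   indices are 1-based natural numbers, as in the paper ([n] = {1,...,n}). *)
From mathcomp Require Import all_boot all_order all_algebra.
Set Implicit Arguments. Unset Strict Implicit. Unset Printing Implicit Defensive.

(* A dimension-n tensor of arbitrary order p: entry a_{i i_2 ... i_p} is
   [T i [:: i_2; ...; i_p]] (indices 1-based); only lists of length p-1
   are meaningful. *)
Definition tensor := nat -> seq nat -> nat.

Definition modpos (a : int) (n : nat) : nat :=
  let b := absz (a %% n)%Z in if b == 0%N then n else b.

(* General product A B of dimension-n tensors, A of order m, B of order k:
   (A B)_{i alpha_1 ... alpha_{m-1}} =
     sum_{i_2..i_m} a_{i i_2..i_m} b_{i_2 alpha_1} ... b_{i_m alpha_{m-1}},
   where the index list s is alpha_1 ++ ... ++ alpha_{m-1}, each of length k-1. *)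
Definition tprod (n m k : nat) (A B : tensor) : tensor :=
  fun i s => \sum_(f : {ffun 'I_(m.-1) -> 'I_n})
     A i [seq (f l).+1 | l <- enum 'I_(m.-1)] *
     \prod_(l < m.-1) B (f l).+1 (take k.-1 (drop (l * k.-1) s)).

Definition tid : tensor := fun i s => nat_of_bool (s == [:: i]).

(* A^t for A of order m; A^t has order (m-1)^t + 1, A^0 = identity matrix,
   A^(t+1) = A A^t (the product is associative, so this is the k-fold power). *)
Fixpoint tpow (n m : nat) (A : tensor) (t : nat) : tensor :=
  match t with
  | 0 => tid
  | t'.+1 => tprod n m ((m.-1) ^ t').+1 A (tpow n m A t')
  end.

Definition majmx (p : nat) (C : tensor) (i j : nat) : nat := C i (nseq p.-1 j).

Definition Sset (n m : nat) (A : tensor) (t j : nat) : seq nat :=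
  [seq u <- iota 1 n | 0 < majmx ((m.-1) ^ t).+1 (tpow n m A t) u j].

Definition mu1 (n : nat) (i j : nat) : nat :=
  nat_of_bool (((i == 1) && ((j == n.-1) || (j == n))) || ((2 <= i <= n) && (j == i.-1))).

Definition diag_index (s : seq nat) : option nat :=
  if s is j :: _ then (if s == nseq (size s) j then Some j else None) else None.

Definition A0 (n : nat) : tensor :=
  fun i s => if diag_index s is Some j then mu1 n i j else 0.

(* A_k, with parameters q, r (k = (n-1) q + r) *)
Definition Ak (n q r : nat) : tensor :=
  fun i s =>
    if diag_index s is Some j then mu1 n i j else
    let a := modpos (r%:Z - q%:Z - 1) n in
    let b := modpos r%:Z n in
    if ~~ has (fun l => modpos (r%:Z - q%:Z + l%:Z) n == i)
              (iota 0 (q.+2))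
       && [forall v : 'I_n, (v.+1 \in s) == ((v.+1 == a) || (v.+1 == b))]
       && all (fun x => 1 <= x <= n) s
    then 1 else 0.

From mathcomp Require Import all_boot all_order all_algebra.
From mathcomp Require Import zify.
Import Order.TTheory.

(* Positivity of the entry (u, j) of the majorization matrix of A^(t+1) means that some
   positive entry a_{u i_2 ... i_m} has every i_l reaching j at time t.  The diagonal
   entries of A_0 and A_k are those of M_1, whose digraph is n -> n-1 -> ... -> 1 -> {n-1, n},
   so S_t(A_0, n-1) is the cyclic interval of residues mod n of length
   1 + (t + n - 2) div (n - 1) starting at t - 1.  The other positive entries of A_k join
   every u outside {r-q, ..., r+1} to the pair {r-q-1, r}.  By induction on t <= k the two
   sets S_t coincide: the interval has length at most q + 2 and, for t < k, it is never
   exactly [r-q-1, r]; so if it contains both r-q-1 and r, which are q + 1 apart, it wraps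
   around from r to r-q-1, and its shift at time t + 1 contains every u outside
   {r-q, ..., r+1}. *)

Definition reaches (n m : nat) (A : tensor) (t u j : nat) : bool :=
  0 < majmx ((m.-1) ^ t).+1 (tpow n m A t) u j.

Lemma reachesS n m A t u j : 1 < m ->
  reaches n m A t.+1 u j =
  [exists f : {ffun 'I_(m.-1) -> 'I_n},
    (0 < A u [seq (f l).+1 | l <- enum 'I_(m.-1)]) &&
    [forall l, reaches n m A t (f l).+1 j]].
Proof.
move=> m_gt1; rewrite /reaches /majmx /= /tprod expnS.
have block_diag (l : 'I_(m.-1)) :
    take (m.-1 ^ t) (drop (l * m.-1 ^ t) (nseq (m.-1 * m.-1 ^ t) j)) = nseq (m.-1 ^ t) j.
  rewrite drop_nseq take_nseq // -mulnBl leq_pmull //; have := ltn_ord l; lia.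
under eq_bigr => f _ do under eq_bigr => l _ do rewrite block_diag.
apply/idP/existsP.
- rewrite lt0n sum_nat_eq0 => /forallPn [f /=]; rewrite -lt0n muln_gt0 => /andP [Af_gt0 prod_gt0].
  by exists f; rewrite Af_gt0; apply/forallP => l; exact: (gt0_prodn prod_gt0).
- case=> f /andP [Af_gt0 /forallP reach_f].
  by rewrite (bigD1 f) //= addn_gt0 muln_gt0 Af_gt0 prodn_gt0.
Qed.

Lemma diag_indexP {s x} : diag_index s = Some x -> forall y, y \in s -> y = x.
Proof.
case: s => //= y s; case: ifP => // /eqP [s_eq] [<-] z.
by rewrite in_cons s_eq mem_nseq => /predU1P [|/andP [_ /eqP]].
Qed.

Lemma diag_index_nseq p x : diag_index (nseq p.+1 x) = Some x.
Proof. by rewrite /= size_nseq eqxx. Qed.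

Section DiagonalPart.

Local Set Implicit Arguments.
Local Unset Strict Implicit.

Variables (n m : nat) (M : nat -> nat -> nat) (A : tensor).
Hypothesis m_gt1 : 1 < m.
Hypothesis A_diag : forall u {s x}, diag_index s = Some x -> A u s = M u x.

Lemma reachesS_edge t u v j :
  1 <= v <= n -> 0 < M u v -> reaches n m A t v j -> reaches n m A t.+1 u j.
Proof.
move=> v_range Muv reach_v; have v_lt : v.-1 < n by lia.
rewrite reachesS //; apply/existsP; exists [ffun=> Ordinal v_lt].
set s := [seq _ | l <- _].
have s_const : all (pred1 v) s by apply/allP => _ /mapP [l _ ->]; rewrite ffunE /=; lia.
have -> : s = nseq (m - 2).+1 v.
  by rewrite (all_pred1P _ _ s_const) size_map size_enum_ord; congr nseq; lia.
rewrite (A_diag _ (diag_index_nseq _ _)) Muv /=.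
by apply/forallP => l; rewrite ffunE /= prednK //; lia.
Qed.

Lemma reachesSP t u j : reaches n m A t.+1 u j ->
  (exists2 v, 1 <= v <= n & (0 < M u v) && reaches n m A t v j) \/
  exists s, [/\ diag_index s = None, 0 < A u s & {in s, forall x, reaches n m A t x j}].
Proof.
rewrite reachesS // => /existsP [f /andP [Af_gt0 /forallP reach_f]].
set s := [seq (f l).+1 | l <- _] in Af_gt0.
have reach_s : {in s, forall x, reaches n m A t x j} by move=> _ /mapP [l _ ->].
case s_diag: (diag_index s) => [x|]; last by right; exists s.
have l0 : 'I_(m.-1) by exists 0; lia.
have x_eq : (f l0).+1 = x.
  by apply: (diag_indexP s_diag); apply: (map_f (fun l => (f l).+1)); rewrite mem_enum.
left; exists x; first by rewrite -x_eq; have := ltn_ord (f l0); lia.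
by rewrite -(A_diag u s_diag) Af_gt0 -x_eq reach_f.
Qed.

End DiagonalPart.

Lemma mu1_gt0 n u v : 1 <= u <= n ->
  (0 < mu1 n u v) = if u == 1 then (v == n.-1) || (v == n) else v == u.-1.
Proof. by move=> u_range; rewrite /mu1 lt0b; case: eqP => [-> | u_ne1] //=; lia. Qed.

Lemma A0_diag n u {s x} : diag_index s = Some x -> A0 n u s = mu1 n u x.
Proof. by rewrite /A0 => ->. Qed.

Lemma Ak_diag n q r u {s x} : diag_index s = Some x -> Ak n q r u s = mu1 n u x.
Proof. by rewrite /Ak => ->. Qed.

Lemma eqn_mod_range n u v : 1 <= u <= n -> 1 <= v <= n -> (u == v %[mod n]) = (u == v).
Proof.
move=> u_range v_range; apply/eqP/eqP => [|-> //].
have residue w : 1 <= w <= n -> w %% n = if w == n then 0 else w.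
  by case: eqP => [-> | w_ne w_range]; rewrite ?modnn ?modn_small //; lia.
by rewrite !residue //; case: eqP; case: eqP; lia.
Qed.

Lemma eqn_modS x y d : (x.+1 == y.+1 %[mod d]) = (x == y %[mod d]).
Proof. by rewrite -[x.+1]addn1 -[y.+1]addn1 eqn_modDr. Qed.

Lemma eqn_mod_lt_double x y d : y < d -> x < d + d -> x == y %[mod d] -> x = y \/ x = y + d.
Proof.
move=> y_lt x_lt; case: (ltnP x d) => [x_lt_d | x_ge_d].
  by rewrite !modn_small // => /eqP; left.
rewrite -(subnK x_ge_d) modnDr !modn_small //; lia.
Qed.

Lemma mod_offset_exists x y d : 0 < d -> exists2 e, e < d & x == y + e %[mod d].
Proof.
move=> d_gt0; exists ((x + (d - y %% d)) %% d); first exact: ltn_pmod.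
rewrite modnDmr; have -> : y + (x + (d - y %% d)) = (y %/ d).+1 * d + x.
  by rewrite mulSn {1}(divn_eq y d); have := ltn_pmod y d_gt0; lia.
by rewrite modnMDl.
Qed.

Lemma offsets_apart da db L q d : da < L -> db < L -> L <= q.+2 -> q.+2 < d ->
  da + q.+1 == db %[mod d] -> (da = 0 /\ L = q.+2) \/ da + q.+1 = db + d.
Proof. by move=> da_lt db_lt L_le q_lt /(@eqn_mod_lt_double _ _ d) [] //; lia. Qed.

Lemma offset_wrap_cases da db e q d : da + q.+1 = db + d -> e < d ->
  db + e <= da \/ exists2 l, l <= q.+1 & e + q.+1 = l + d.
Proof.
by move=> sum_eq e_lt; case: (leqP (db + e) da) => ?; [left | right; exists (e + q.+1 - d)]; lia.
Qed.

Section Window.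

Local Set Implicit Arguments.
Local Unset Strict Implicit.

Variable n : nat.
Hypothesis n_gt2 : 2 < n.

(* [wstart t] is t - 1, shifted by n to avoid truncated subtraction. *)
Definition wstart t := t + n.-1.
Definition wlen t := 1 + (t + n.-2) %/ n.-1.
Definition in_window t u := exists2 d, d < wlen t & u == wstart t + d %[mod n].

Lemma wlen_gt0 t : 0 < wlen t.
Proof. by []. Qed.

Lemma wlenS t : wlen t.+1 = wlen t + (n.-1 %| wstart t).
Proof.
rewrite /wlen /wstart [t.+1 + _]addSn (_ : t + n.-1 = (t + n.-2).+1); last by lia.
by rewrite divnS; lia.
Qed.

Lemma wlen_leS t : wlen t <= wlen t.+1.
Proof. by rewrite wlenS leq_addr. Qed.

Lemma wstartS t : wstart t.+1 = (wstart t).+1.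
Proof. by rewrite /wstart addSn. Qed.

Lemma wlen_jumpE t : (n.-1 %| wstart t) = (wstart t + wlen t == 0 %[mod n]).
Proof.
have [J [i [i_lt t_eq]]] : exists J i, i < n.-1 /\ t + n.-2 = J * n.-1 + i.
  by exists ((t + n.-2) %/ n.-1), ((t + n.-2) %% n.-1); rewrite ltn_pmod -?divn_eq //; lia.
have wlen_eq : wlen t = J.+1 by rewrite /wlen t_eq divnMDl ?divn_small; lia.
have wstart_eq : wstart t = J * n.-1 + i.+1 by rewrite /wstart; lia.
rewrite wlen_eq wstart_eq dvdn_addr ?dvdn_mull //.
have -> : J * n.-1 + i.+1 + J.+1 = J * n + i.+2 by rewrite -[n in J * n]prednK; lia.
rewrite modnMDl mod0n -(modnn n) eqn_mod_range; try lia.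
by apply/idP/eqP => [/dvdn_leq | <-]; [lia | exact: dvdnn].
Qed.

Lemma in_windowS t u : 1 < u <= n -> in_window t.+1 u <-> in_window t u.-1.
Proof.
move=> u_range; have u_eq : u = u.-1.+1 by lia.
split=> [[d d_lt] | [d d_lt u_in]].
- rewrite wstartS addSn {1}u_eq eqn_modS => u_in.
  case: (ltnP d (wlen t)) => [|d_ge]; first by exists d.
  have [jump d_eq] : n.-1 %| wstart t /\ d = wlen t by move: d_lt; rewrite wlenS; case: (_ %| _); lia.
  have zero_in : wstart t + d == 0 %[mod n] by rewrite d_eq -wlen_jumpE.
  have : u == 1 %[mod n] by rewrite u_eq eqn_modS (eqP u_in).
  by rewrite eqn_mod_range; lia.
- by exists d; [rewrite wlenS; lia | rewrite wstartS addSn {1}u_eq eqn_modS].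
Qed.

Lemma in_windowS_1 t : in_window t.+1 1 <-> in_window t n.-1 \/ in_window t n.
Proof.
have eqn_mod0 x : (n == x %[mod n]) = (0 == x %[mod n]) by rewrite modnn mod0n.
have eqn_mod_pred x : (n.-1 == x %[mod n]) = (0 == x.+1 %[mod n]).
  by rewrite -eqn_modS prednK ?modnn ?mod0n //; lia.
have wlen_bounds : wlen t <= wlen t.+1 <= (wlen t).+1 by rewrite wlenS; case: (_ %| _); lia.
rewrite /in_window wstartS; split=> [[d d_lt] | [[d d_lt] | [d d_lt]]].
- rewrite addSn eqn_modS -eqn_mod0 => n_in.
  case: (ltnP d (wlen t)) => [|d_ge]; first by right; exists d.
  have := wlen_gt0 t; left; exists d.-1; first by lia.
  by rewrite eqn_mod_pred -addnS prednK -?eqn_mod0 //; lia.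
- rewrite eqn_mod_pred -addnS => zero_in.
  case: (ltnP d.+1 (wlen t.+1)) => [dS_lt | dS_ge].
    by exists d.+1; rewrite // addSn eqn_modS.
  have : n.-1 %| wstart t by rewrite wlen_jumpE (_ : wlen t = d.+1) //; lia.
  by move=> jump; move: dS_ge; rewrite wlenS jump; lia.
- by rewrite eqn_mod0 => zero_in; exists d; rewrite ?addSn ?eqn_modS //; lia.
Qed.

Lemma wlen_le t q r : r <= n.-1 -> t <= n.-1 * q + r -> wlen t <= q.+2.
Proof. by move=> r_le t_le; rewrite /wlen addnC addn1 ltnS -ltnS ltn_divLR; lia. Qed.

Lemma wlen_max_wstart t q r : 1 <= r <= n.-1 -> t < n.-1 * q + r -> wlen t = q.+2 ->
  ~~ (wstart t + q.+1 == r %[mod n]).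
Proof.
rewrite mulnC => r_range t_lt; rewrite /wlen add1n => -[div_eq].
have t_ge : q.+1 * n.-1 <= t + n.-2 by rewrite -leq_divRL ?div_eq //; lia.
rewrite mulSn in t_ge; set i := t - q * n.-1.
have -> : wstart t + q.+1 = q.+1 * n.-1.+1 + i by rewrite /wstart /i mulSn mulnS; lia.
by rewrite prednK ?modnMDl ?eqn_mod_range; lia.
Qed.

(* Here a = r-q-1 and b = r mod n, and u is none of r-q, ..., r+1. *)
Lemma in_windowS_cover t q r a b u : q.+2 < n -> 1 <= r <= n.-1 -> t < n.-1 * q + r ->
    a + q.+1 == r %[mod n] -> b == r %[mod n] -> in_window t a -> in_window t b ->
  (forall l, l <= q.+1 -> ~~ (u + q == r + l %[mod n])) -> in_window t.+1 u.
Proof.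
move=> q_lt r_range t_lt a_r b_r [da da_lt a_in] [db db_lt b_in] u_out.
have [e e_lt u_eq] := mod_offset_exists u r.+1 n (ltnW (ltnW n_gt2)).
have len_le : wlen t <= q.+2 := wlen_le (andP r_range).2 (ltnW t_lt).
have da_db : da + q.+1 == db %[mod n].
  rewrite -(eqn_modDl (wstart t)) addnA -modnDml -(eqP a_in) modnDml (eqP a_r).
  by rewrite -(eqP b_in) eq_sym.
have [[da0 len_eq] | da_eq] := offsets_apart da db (wlen t) q n da_lt db_lt len_le q_lt da_db.
  have wstart_r : wstart t + q.+1 == r %[mod n].
    by rewrite da0 addn0 in a_in; rewrite -modnDml -(eqP a_in) modnDml.
  by rewrite (negbTE (wlen_max_wstart r_range t_lt len_eq)) in wstart_r.
have [de_le | [l l_le e_eq]] := offset_wrap_cases da db e q n da_eq e_lt.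
  exists (db + e); first exact: leq_ltn_trans de_le (leq_trans da_lt (wlen_leS t)).
  rewrite (eqP u_eq) wstartS addSn addnA -addSn eqn_modDr eqn_modS.
  by rewrite -(eqP b_in) eq_sym.
case/negP: (u_out l l_le).
rewrite -modnDml (eqP u_eq) modnDml -!addnA addSn -!addnS e_eq addnA.
by rewrite modnDr.
Qed.

End Window.

Lemma eqz_mod_nat (x y d : nat) : (x%:Z == y%:Z %[mod d%:Z])%Z = (x == y %[mod d]).
Proof. by rewrite !modz_nat eqz_nat. Qed.

Lemma modpos_range n z : 0 < n -> 1 <= modpos z n <= n.
Proof.
move=> n_gt0; rewrite /modpos; case: eqP => [_ | /eqP]; first lia.
rewrite -lt0n => -> /=; rewrite -lez_nat gez0_abs ?modz_ge0 //; last lia.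
by rewrite ltW // ltz_pmod.
Qed.

Lemma modpos_modz n z : 0 < n -> ((modpos z n)%:Z = z %[mod n])%Z.
Proof.
move=> n_gt0; rewrite /modpos; case: eqP => [/eqP | _].
  by rewrite modzz absz_eq0 => /eqP ->.
by rewrite gez0_abs ?modz_mod ?modz_ge0 //; lia.
Qed.

Lemma modpos_eq n z u : 0 < n -> 1 <= u <= n -> (modpos z n == u) = (u%:Z == z %[mod n])%Z.
Proof.
move=> n_gt0 u_range; apply/eqP/eqP => [<- | u_z]; first by rewrite modpos_modz.
apply/eqP; rewrite -(eqn_mod_range n) ?modpos_range // -eqz_mod_nat.
by rewrite modpos_modz // u_z.
Qed.

Lemma Ak_offdiag_gt0 n q r u s : 0 < n -> diag_index s = None -> 0 < Ak n q r u s ->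
  [/\ ~~ has (fun l => modpos (r%:Z - q%:Z + l%:Z) n == u) (iota 0 q.+2),
      modpos (r%:Z - q%:Z - 1) n \in s & modpos r%:Z n \in s].
Proof.
move=> n_gt0 s_diag; rewrite /Ak s_diag; case: ifP => // /andP [/andP [u_out /forallP s_ab] _] _.
have in_s c : 1 <= c <= n -> (c == modpos (r%:Z - q%:Z - 1) n) || (c == modpos r%:Z n) -> c \in s.
  move=> c_range c_ab; have c_lt : c.-1 < n by lia.
  by have := s_ab (Ordinal c_lt); rewrite /= prednK ?c_ab => [/eqP | ]; lia.
by split; rewrite // in_s ?modpos_range ?eqxx ?orbT.
Qed.

Section Reachability.

Local Set Implicit Arguments.
Local Unset Strict Implicit.

Variables n m : nat.
Hypotheses (m_gt1 : 1 < m) (n_gt2 : 2 < n).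

Lemma reaches_A0S t u j : 1 <= u <= n ->
  reaches n m (A0 n) t.+1 u j =
  if u == 1 then reaches n m (A0 n) t n.-1 j || reaches n m (A0 n) t n j
  else reaches n m (A0 n) t u.-1 j.
Proof.
move=> u_range; apply/idP/idP.
- case/(reachesSP m_gt1 (A0_diag n)) => [[v _ /andP [Muv reach_v]] | [s [s_diag A0_gt0 _]]].
    move: Muv; rewrite mu1_gt0 //; case: (u == 1) => [/orP [] | ] /eqP v_eq;
      by move: reach_v; rewrite v_eq => ->; rewrite ?orbT.
  by rewrite /A0 s_diag in A0_gt0.
- have edge v : 1 <= v <= n -> 0 < mu1 n u v -> reaches n m (A0 n) t v j -> reaches n m (A0 n) t.+1 u j.
    by move=> v_range Muv; apply: (reachesS_edge m_gt1 (A0_diag n) v_range Muv).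
  case: eqP => [u1 | u_ne1].
    by case/orP; apply: edge; rewrite ?mu1_gt0 ?u1 ?eqxx ?orbT //; lia.
  by apply: edge; rewrite ?mu1_gt0 //; [lia | case: eqP].
Qed.

Lemma reaches_A0_window t u : 1 <= u <= n -> reaches n m (A0 n) t u n.-1 <-> in_window n t u.
Proof.
elim: t u => [|t IH] u u_range.
  rewrite /reaches /majmx /tid /= lt0b /in_window /wlen /wstart divn_small; last by lia.
  split=> [/eqP [<-] | [d d_lt]]; first by exists 0; rewrite ?addn0.
  by rewrite (_ : d = 0) ?add0n ?addn0 ?eqn_mod_range; try lia; move=> /eqP ->.
rewrite reaches_A0S //.
case: ifP => [/eqP -> | u_ne1]; last by rewrite (IH u.-1) ?in_windowS //; lia.
have IHa : reaches n m (A0 n) t n.-1 n.-1 <-> in_window n t n.-1 by apply: IH; lia.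
have IHb : reaches n m (A0 n) t n n.-1 <-> in_window n t n by apply: IH; lia.
by rewrite in_windowS_1 // -IHa -IHb; split=> /orP.
Qed.

Lemma in_windowS_Ak q r t u s : q.+2 < n -> 1 <= r <= n.-1 -> t < n.-1 * q + r -> 1 <= u <= n ->
    diag_index s = None -> 0 < Ak n q r u s -> {in s, forall c, 1 <= c <= n -> in_window n t c} ->
  in_window n t.+1 u.
Proof.
move=> q_lt r_range t_lt u_range s_diag Ak_gt0 s_window; have n_gt0 : 0 < n by lia.
have [u_out a_s b_s] := Ak_offdiag_gt0 n q r u s n_gt0 s_diag Ak_gt0.
apply: (in_windowS_cover n_gt2 q_lt r_range t_lt _ _ (s_window _ a_s _) (s_window _ b_s _)).
- rewrite -eqz_mod_nat PoszD -modzDml modpos_modz // modzDml.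
  by rewrite (_ : r%:Z - q%:Z - 1 + (q.+1)%:Z = r%:Z)%R //; lia.
- by rewrite -eqz_mod_nat modpos_modz.
- exact: modpos_range.
- exact: modpos_range.
move=> l l_le; move: u_out; apply: contra => u_l; apply/hasP; exists l; first by rewrite mem_iota; lia.
rewrite modpos_eq // -(eqz_modDr q%:Z) (_ : r%:Z - q%:Z + l%:Z + q%:Z = (r + l)%:Z)%R; last by lia.
by rewrite -PoszD eqz_mod_nat.
Qed.

Lemma reaches_Ak q r t u : q.+2 < n -> 1 <= r <= n.-1 -> t <= n.-1 * q + r -> 1 <= u <= n ->
  reaches n m (Ak n q r) t u n.-1 = reaches n m (A0 n) t u n.-1.
Proof.
move=> q_lt r_range; elim: t u => [// | t IH] u t_le u_range.
have IH' v : 1 <= v <= n -> reaches n m (Ak n q r) t v n.-1 = reaches n m (A0 n) t v n.-1.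
  by move=> v_range; apply: IH; lia.
apply/idP/idP.
- case/(reachesSP m_gt1 (Ak_diag n q r)) => [[v v_range /andP [Muv reach_v]] | [s [s_diag Ak_gt0 reach_s]]].
    by apply: (reachesS_edge m_gt1 (A0_diag n) v_range Muv); rewrite -IH'.
  apply/(reaches_A0_window _ u_range)/(in_windowS_Ak q_lt r_range t_le u_range s_diag Ak_gt0).
  by move=> c c_s c_range; apply/(reaches_A0_window _ c_range); rewrite -IH' ?reach_s.
- case/(reachesSP m_gt1 (A0_diag n)) => [[v v_range /andP [Muv reach_v]] | [s [s_diag A0_gt0 _]]].
    by apply: (reachesS_edge m_gt1 (Ak_diag n q r) v_range Muv); rewrite IH'.
  by rewrite /A0 s_diag in A0_gt0.
Qed.

End Reachability.

Theorem proposition3p1 (m n k q r : nat) :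
  2 <= m ->
  1 <= k -> k <= n ^ 2 + 2 - 3 * n ->
  k = (n - 1) * q + r -> 1 <= r <= n - 1 ->
  forall t : nat, 1 <= t <= k ->
    Sset n m (Ak n q r) t (n - 1) = Sset n m (A0 n) t (n - 1).
Proof.
move=> m_ge2 k_ge1 k_le k_eq r_range t t_range.
have n_gt2 : 2 < n by move: k_le r_range; case: n k_eq => [|[|[|n]]] //=; lia.
have q_lt : q.+2 < n.
  rewrite ltnNge; apply/negP => q_ge; move: k_le; rewrite k_eq expnS expn1.
  have : (n - 1) * (n - 2) <= (n - 1) * q by rewrite leq_mul2l; lia.
  nia.
apply: eq_in_filter => u; rewrite mem_iota => u_range.
by rewrite subn1; apply: reaches_Ak; lia.
Qed.
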